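(* Let $R$ be a unital $*$-ring, $p\in R$ a projection and $\phi:R\to pRp$ a unital $*$-ring isomorphism, and let $A=R[t_+,t_-,\phi]$ with its $\mathbb Z$-grading and involution. Then: (1) $R$ is proper if and only if $A$ is graded proper; (2) $R$ is positive definite if and only if $A$ is positive definite.
   Context: With $p_0=1$, $p_n=\phi^n(p_0)$, the corner skew Laurent polynomial ring $R[t_+,t_-,\phi]$ is the unital ring of formal expressions $t_-^m r_{-m}+\dots+t_-r_{-1}+r_0+r_1t_++\dots+r_nt_+^n$ with $r_{-i}\in p_iR$, $r_j\in Rp_j$, componentwise addition and multiplication determined by distributivity and $t_-t_+=1$, $t_+t_-=p$, $rt_-=t_-\phi(r)$, $t_+r=\phi(r)t_+$. It is $\mathbb Z$-graded with $A_0=R$, $A_n=Rp_nt_+^n$, $A_{-n}=t_-^np_nR$ ($n\ge1$), and has the involution extending that of $R$ additively by $(t_-^ir)^*=r^*t_+^i$, $(rt_+^i)^*=t_-^ir^*$. A projection is $p=p^2=p^*$. A $*$-ring is proper if $xx^*=0\Rightarrow x=0$, graded proper if this holds for homogeneous $x$, and positive definite if for all $n$ and $x_1,\dots,x_n$, $\sum_i x_ix_i^*=0$ implies all $x_i=0$. *)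

From HB Require Import structures.
From mathcomp Require Import all_boot all_order all_algebra.
From Stdlib Require Import ClassicalEpsilon.
Set Implicit Arguments. Unset Strict Implicit. Unset Printing Implicit Defensive.
Import Order.TTheory GRing.Theory Num.Theory.
Local Open Scope ring_scope.

Section CornerSkew.
Variable R : pzRingType.

Definition is_involution (s : R -> R) : Prop :=
  [/\ forall x y, s (x + y) = s x + s y,
      forall x y, s (x * y) = s y * s x
    & forall x, s (s x) = x].

Definition is_projection (s : R -> R) (p : R) : Prop := p * p = p /\ s p = p.

Definition is_corner_star_iso (s : R -> R) (p : R) (phi : R -> R) : Prop :=
  (forall x y, phi (x + y) = phi x + phi y) /\
  (forall x y, phi (x * y) = phi x * phi y) /\
  phi 1 = p /\
  (forall x, phi (s x) = s (phi x)) /\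
  injective phi /\
  (forall x, p * phi x * p = phi x) /\
  (forall y, p * y * p = y -> exists x, phi x = y).

Definition star_proper (s : R -> R) : Prop := forall x : R, x * s x = 0 -> x = 0.

Definition star_positive_definite (s : R -> R) : Prop :=
  forall (n : nat) (x : 'I_n -> R),
    \sum_(i < n) x i * s (x i) = 0 -> forall i, x i = 0.

Variables (s : R -> R) (p : R) (phi : R -> R).

Definition phin (n : nat) : R -> R := iter n phi.
Definition pn (n : nat) : R := phin n 1.

(* inverse of phi : R -> pRp (chosen by classical choice; only applied to
   elements of the image) *)
Definition phiinv (y : R) : R := epsilon (inhabits 0) (fun x => phi x = y).
Definition phiinvn (n : nat) : R -> R := iter n phiinv.

(* An element of A is represented by its family of coefficients:
   cf k is r_k (coefficient of r_k t_+^k) for k >= 0, and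
   cf (-k) is r_{-k} (coefficient of t_-^k r_{-k}) for k >= 1;
   all coefficients vanish outside [-bnd, bnd]. *)
Record cslp := CSLP { cbnd : nat; ccf : int -> R }.

Definition cwf (x : cslp) : Prop :=
  [/\ forall k : int, (cbnd x < absz k)%N -> ccf x k = 0,
      forall n : nat, pn n * ccf x (- n%:Z) = ccf x (- n%:Z)
    & forall n : nat, ccf x n%:Z * pn n = ccf x n%:Z].

(* product of a homogeneous element of degree i with coefficient a and a
   homogeneous element of degree j with coefficient b: the coefficient
   (in degree i + j) of the product, computed from t_- t_+ = 1, t_+ t_- = p,
   r t_- = t_- phi(r), t_+ r = phi(r) t_+:
   (a t+^n)(b t+^m)   = a phi^n(b) t+^(n+m)
   (t-^n a)(t-^m b)   = t-^(n+m) phi^m(a) b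
   (a t+^n)(t-^m b)   = a phi^(n-m)(b) t+^(n-m)      if m <= n
                      = t-^(m-n) phi^(m-n)(a) b      if n < m
   (t-^n a)(b t+^m)   = t-^(n-k) phi^-k(p_k a b p_k) t+^(m-k),  k = min n m *)
Definition hmul (i j : int) (a b : R) : R :=
  let n := absz i in let m := absz j in
  if 0 <= i then
    if 0 <= j then a * phin n b
    else (if (m <= n)%N then a * phin (n - m) b else phin (m - n) a * b)
  else
    if 0 <= j then
      (let k := minn n m in phiinvn k (pn k * (a * b) * pn k))
    else phin m a * b.

Definition cmul (x y : cslp) : cslp :=
  CSLP (cbnd x + cbnd y) (fun k =>
    \sum_(i < (cbnd x).*2.+1) \sum_(j < (cbnd y).*2.+1)
      let di := (i : nat)%:Z - (cbnd x)%:Z in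
      let dj := (j : nat)%:Z - (cbnd y)%:Z in
      if di + dj == k then hmul di dj (ccf x di) (ccf y dj) else 0).

Definition cadd (x y : cslp) : cslp :=
  CSLP (maxn (cbnd x) (cbnd y)) (fun k => ccf x k + ccf y k).

Definition czero : cslp := CSLP 0 (fun _ => 0).

(* involution: (t-^i r)^* = r^* t+^i, (r t+^i)^* = t-^i r^* *)
Definition cstar (x : cslp) : cslp := CSLP (cbnd x) (fun k => s (ccf x (- k))).

Definition ceq (x y : cslp) : Prop := forall k, ccf x k = ccf y k.

Definition homogeneous (x : cslp) : Prop :=
  exists d : int, forall k, k != d -> ccf x k = 0.

Definition A_graded_proper : Prop :=
  forall x : cslp, cwf x -> homogeneous x ->
    ceq (cmul x (cstar x)) czero -> ceq x czero.

Definition A_positive_definite : Prop :=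
  forall (n : nat) (x : 'I_n -> cslp), (forall i, cwf (x i)) ->
    ceq (\big[cadd/czero]_(i < n) cmul (x i) (cstar (x i))) czero ->
    forall i, ceq (x i) czero.

End CornerSkew.

From mathcomp Require Import all_boot all_order all_algebra.
From mathcomp Require Import zify.
From Stdlib Require Import ClassicalEpsilon.
Set Implicit Arguments. Unset Strict Implicit. Unset Printing Implicit Defensive.
Import Order.TTheory GRing.Theory Num.Theory.
Local Open Scope ring_scope.

(* The degree-0 coefficient of [x x^*] is a sum over the degrees [d] of [x] of
   [r_d r_d^*] for [d >= 0] and of [phi^-n (r_d r_d^* )] for [d = -n < 0].  For a
   homogeneous [x] only one term survives, and [phi^-n] is injective on the corner
   [p_n R p_n] containing [r_d r_d^*], so properness of [R] gives [r_d = 0].  For a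
   sum of several [x_i x_i^*], apply [phi^B] for a bound [B] on all degrees: every
   term becomes a hermitian square [y y^*] in [R] with [y = phi^B(r_d)] or
   [y = phi^(B-n)(r_d)], and [phi] is injective, so positive definiteness of [R]
   kills every coefficient.  Conversely [R] sits in [A] as the degree-0 part. *)

Section SymmetricSums.
Variable V : zmodType.

Definition sym_sum (b : nat) (F : int -> V) : V :=
  \sum_(i < b.*2.+1) F ((i : nat)%:Z - b%:Z).

Lemma sym_sum0 F : sym_sum 0 F = F 0.
Proof. by rewrite /sym_sum big_ord1 subrr. Qed.

Lemma sym_sumS b F :
  sym_sum b.+1 F = F (- (b.+1)%:Z) + sym_sum b F + F (b.+1)%:Z.
Proof.
rewrite /sym_sum doubleS big_ord_recl big_ord_recr /= addrA.
congr (F _ + _ + F _).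
- by rewrite sub0r.
- by apply: eq_bigr => i _; congr F; rewrite /bump /=; lia.
- by rewrite /bump /= -addnn; lia.
Qed.

Lemma sym_sum_pred1 b c F :
  sym_sum b (fun d => if d == c then F d else 0) =
  if (absz c <= b)%N then F c else 0.
Proof.
elim: b => [|b IH].
  rewrite sym_sum0; case: (eqVneq 0 c) => [<- //|c_neq0].
  by rewrite ifF //; apply/negbTE; lia.
rewrite sym_sumS IH.
case: (eqVneq (- (b.+1)%:Z) c) => [cE|cN].
  by subst c; rewrite abszN absz_nat ltnn leqnn !addr0.
case: (eqVneq (b.+1)%:Z c) => [cE|cP].
  by subst c; rewrite absz_nat ltnn leqnn !add0r.
rewrite addr0 add0r; congr (if _ then _ else _); lia.
Qed.

Lemma sym_sum_widen b B F : (b <= B)%N ->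
  (forall d, (b < absz d)%N -> F d = 0) -> sym_sum b F = sym_sum B F.
Proof.
move=> /subnK <-; elim: (B - b)%N => [|k IH] F0 //.
by rewrite addSn sym_sumS -IH // !F0 ?add0r ?addr0 //; lia.
Qed.

End SymmetricSums.

Lemma ccf_big_cadd (R : pzRingType) (I : Type) (r : seq I) (P : pred I)
    (F : I -> cslp R) k :
  ccf (\big[@cadd R/czero R]_(i <- r | P i) F i) k = \sum_(i <- r | P i) ccf (F i) k.
Proof. exact: (big_morph (fun y => ccf y k)). Qed.

Section CornerIsomorphism.
Variables (R : pzRingType) (s : R -> R) (p : R) (phi : R -> R).
Hypothesis Hs : is_involution s.
Hypothesis Hp : is_projection s p.
Hypothesis Hphi : is_corner_star_iso s p phi.

Let sM x y : s (x * y) = s y * s x. Proof. by case: Hs. Qed.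
Let sK x : s (s x) = x. Proof. by case: Hs. Qed.

Lemma involution1 : s 1 = 1.
Proof. by have := sM (s 1) 1; rewrite mulr1 sK mulr1. Qed.

Let phiD x y : phi (x + y) = phi x + phi y. Proof. by case: Hphi. Qed.
Let phiM x y : phi (x * y) = phi x * phi y. Proof. by case: Hphi => _ []. Qed.
Let phis x : phi (s x) = s (phi x). Proof. by case: Hphi => _ [_ [_ []]]. Qed.
Let phi_inj : injective phi. Proof. by case: Hphi => _ [_ [_ [_ []]]]. Qed.
Let phi_corner x : p * phi x * p = phi x.
Proof. by case: Hphi => _ [_ [_ [_ [_ [H _]]]]]; apply: H. Qed.
Let phi_onto y : p * y * p = y -> exists x, phi x = y.
Proof. by case: Hphi => _ [_ [_ [_ [_ [_ H]]]]]; apply: H. Qed.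

Lemma phin0 n : phin phi n 0 = 0.
Proof.
have phi0 : phi 0 = 0 by apply: (@addrI _ (phi 0)); rewrite -phiD !addr0.
by elim: n => //= n IH; rewrite /phin /= -/(phin phi n 0) IH phi0.
Qed.

Lemma phinD n x y : phin phi n (x + y) = phin phi n x + phin phi n y.
Proof. by elim: n => //= n IH; rewrite /phin /= -phiD -IH. Qed.

Lemma phinM n x y : phin phi n (x * y) = phin phi n x * phin phi n y.
Proof. by elim: n => //= n IH; rewrite /phin /= -phiM -IH. Qed.

Lemma phin_involution n x : phin phi n (s x) = s (phin phi n x).
Proof. by elim: n => //= n IH; rewrite /phin /= -phis -IH. Qed.

Lemma phin_inj n : injective (phin phi n).
Proof. by elim: n => [|n IH] x y //= /phi_inj /IH. Qed.

Lemma phin_sum n (I : Type) (r : seq I) (P : pred I) (F : I -> R) :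
  phin phi n (\sum_(i <- r | P i) F i) = \sum_(i <- r | P i) phin phi n (F i).
Proof. exact: (big_morph _ (phinD n) (phin0 n)). Qed.

Lemma involution_pn n : s (pn phi n) = pn phi n.
Proof. by rewrite /pn -phin_involution involution1. Qed.

Lemma phiinvnK n : cancel (phin phi n) (phiinvn phi n).
Proof.
have phiinvK : cancel phi (phiinv phi).
  move=> x; apply: phi_inj; rewrite /phiinv.
  exact: (epsilon_spec (inhabits 0) (fun z => phi z = phi x) (ex_intro _ x erefl)).
elim: n => // n IH x.
by rewrite /phiinvn /phin iterSr iterS phiinvK; apply: IH.
Qed.

Lemma phiinvn0 n : phiinvn phi n 0 = 0.
Proof. by rewrite -{1}(phin0 n) phiinvnK. Qed.

Lemma phin_onto_corner n y :
  pn phi n * y * pn phi n = y -> exists z, phin phi n z = y.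
Proof.
elim: n y => [|n IH] y; first by exists y.
rewrite /pn /phin iterS -/(phin phi n 1) -/(pn phi n) => y_corner.
have pp : p * p = p by case: Hp.
have p_pn : p * phi (pn phi n) = phi (pn phi n) by rewrite -phi_corner !mulrA pp.
have pn_p : phi (pn phi n) * p = phi (pn phi n) by rewrite -phi_corner -!mulrA pp.
have /phi_onto [w phi_w] : p * y * p = y.
  by rewrite -y_corner -p_pn -pn_p !mulrA pp -!mulrA pp.
have /IH [z phin_z] : pn phi n * w * pn phi n = w.
  by apply: phi_inj; rewrite !phiM phi_w.
by exists z; rewrite iterS -/(phin phi n z) phin_z.
Qed.

Lemma phinK_corner n y : pn phi n * y * pn phi n = y ->
  phin phi n (phiinvn phi n y) = y.
Proof. by move=> /phin_onto_corner [z <-]; rewrite phiinvnK. Qed.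

Lemma corner_mulr_involution n a : pn phi n * a = a ->
  pn phi n * (a * s a) * pn phi n = a * s a.
Proof. by move=> pa; rewrite mulrA pa -mulrA -(involution_pn n) -sM pa. Qed.

Lemma pn_Negz x n : cwf phi x -> pn phi n.+1 * ccf x (Negz n) = ccf x (Negz n).
Proof. by case=> _ + _; rewrite NegzE. Qed.

Lemma hmul0l i j b : hmul phi i j 0 b = 0.
Proof.
rewrite /hmul /=; repeat case: ifP => _;
  by rewrite ?mul0r ?phin0 ?mul0r ?mulr0 ?mul0r ?phiinvn0.
Qed.

(* The contribution of the degree-[d] coefficient of [x] to the degree-0
   coefficient of [x x^*]. *)
Definition diag_term (x : cslp R) (d : int) : R :=
  hmul phi d (- d) (ccf x d) (s (ccf x d)).

Lemma diag_term_nat x (n : nat) : diag_term x n = ccf x n * s (ccf x n).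
Proof.
by rewrite /diag_term /hmul /= abszN absz_nat subnn; case: n => [|n] //=; case: ifP.
Qed.

Lemma diag_term_Negz x n : cwf phi x ->
  diag_term x (Negz n) = phiinvn phi n.+1 (ccf x (Negz n) * s (ccf x (Negz n))).
Proof.
by move=> x_wf; rewrite /diag_term /hmul /= minnn corner_mulr_involution ?pn_Negz.
Qed.

Lemma diag_term_out x d : cwf phi x -> (cbnd x < absz d)%N -> diag_term x d = 0.
Proof. by case=> x_bnd _ _ /x_bnd; rewrite /diag_term => ->; rewrite hmul0l. Qed.

Lemma ccf_cmul_cstar0 x : cwf phi x ->
  ccf (cmul phi x (cstar s x)) 0 = sym_sum (cbnd x) (diag_term x).
Proof.
move=> x_wf.
change (sym_sum (cbnd x) (fun di => sym_sum (cbnd x) (fun dj =>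
  if di + dj == 0 then hmul phi di dj (ccf x di) (s (ccf x (- dj))) else 0))
  = sym_sum (cbnd x) (diag_term x)).
apply: eq_bigr => i _; set di := (_ - _).
transitivity (sym_sum (cbnd x) (fun dj =>
  if dj == - di then hmul phi di dj (ccf x di) (s (ccf x (- dj))) else 0)).
  by apply: eq_bigr => j _; rewrite addrC addr_eq0.
rewrite sym_sum_pred1 opprK abszN; case: leqP => // /(diag_term_out x_wf).
by rewrite /diag_term.
Qed.

Lemma ccf_cmul_cstar0_homogeneous x d : cwf phi x ->
  (forall k, k != d -> ccf x k = 0) ->
  ccf (cmul phi x (cstar s x)) 0 = diag_term x d.
Proof.
move=> x_wf xd; rewrite ccf_cmul_cstar0 //.
transitivity (sym_sum (cbnd x) (fun e => if e == d then diag_term x e else 0)).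
  by apply: eq_bigr => i _; case: eqP => // /eqP /xd; rewrite /diag_term => ->; rewrite hmul0l.
by rewrite sym_sum_pred1; case: leqP => // /(diag_term_out x_wf).
Qed.

Lemma diag_term_eq0 x d : star_proper s -> cwf phi x ->
  diag_term x d = 0 -> ccf x d = 0.
Proof.
move=> s_proper x_wf; case: d => n; first by rewrite diag_term_nat => /s_proper.
rewrite diag_term_Negz // => diag0; apply: s_proper.
by rewrite -(phinK_corner (corner_mulr_involution (pn_Negz n x_wf))) diag0 phin0.
Qed.

(* The coefficient of [x] in degree [d] transported into [R] by [phi^B]; for
   [d = -n] the exponent [B - n] compensates the [phi^-n] in [diag_term]. *)
Definition lift_coef (x : cslp R) (B : nat) (d : int) : R :=
  phin phi (if 0 <= d then B else (B - absz d)%N) (ccf x d).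

Lemma phin_diag_term x B d : cwf phi x -> (cbnd x <= B)%N ->
  phin phi B (diag_term x d) = lift_coef x B d * s (lift_coef x B d).
Proof.
move=> x_wf bndB; rewrite /lift_coef; case: d => n.
  by rewrite diag_term_nat phinM phin_involution.
rewrite diag_term_Negz // (_ : 0 <= Negz n = false) //; case: (leqP n.+1 B) => nB.
  rewrite -{1}(subnK nB) /phin iterD -/(phin phi _ _) -/(phin phi _ _).
  rewrite phinK_corner ?corner_mulr_involution ?pn_Negz //.
  by rewrite phinM phin_involution.
have -> : ccf x (Negz n) = 0 by case: x_wf => + _ _; apply; exact: leq_trans nB.
by rewrite !mul0r phiinvn0 !phin0 mul0r.
Qed.

Lemma lift_coef_eq0 x B d : lift_coef x B d = 0 -> ccf x d = 0.
Proof.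
rewrite /lift_coef; set m := (if _ then _ else _) => lift0.
by apply: (@phin_inj m); rewrite lift0 phin0.
Qed.

Lemma A_graded_proper_of_proper : star_proper s -> A_graded_proper s phi.
Proof.
move=> s_proper x x_wf [d xd] xx0 k; case: (eqVneq k d) => [->|/xd] //=.
have := xx0 0; rewrite (ccf_cmul_cstar0_homogeneous x_wf xd).
exact: diag_term_eq0.
Qed.

Lemma A_positive_definite_of_positive_definite :
  star_positive_definite s -> A_positive_definite s phi.
Proof.
move=> s_posdef n x x_wf xx0 i k /=.
pose B := (\max_(j < n) cbnd (x j))%N.
have bndB j : (cbnd (x j) <= B)%N by apply: leq_bigmax.
pose y (jd : 'I_n * 'I_B.*2.+1) := lift_coef (x jd.1) B ((jd.2 : nat)%:Z - B%:Z).
have yy0 : \sum_(j < n) \sum_(e < B.*2.+1) y (j, e) * s (y (j, e)) = 0.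
  have := xx0 0; rewrite ccf_big_cadd => /(congr1 (phin phi B)).
  rewrite phin0 phin_sum => phi_xx0; rewrite -[RHS]phi_xx0; apply: eq_bigr => j _.
  rewrite ccf_cmul_cstar0 // (sym_sum_widen (bndB j)) => [|d]; last exact: diag_term_out.
  by rewrite phin_sum; apply: eq_bigr => e _; rewrite phin_diag_term.
rewrite pair_bigA /= in yy0.
have y0 : forall jd, y jd = 0.
  move: yy0; rewrite (big_enum_val (fun jd => y jd * s (y jd))) => /s_posdef y0 jd.
  by rewrite -(enum_rankK jd) y0.
case: (leqP (absz k) B) => kB; last first.
  by case: (x_wf i) => + _ _; apply; exact: leq_ltn_trans (bndB i) kB.
apply: (@lift_coef_eq0 _ B).
have := y0 (i, inord (absz (k + B%:Z))); rewrite /y /= inordK; last by lia.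
by have -> : (absz (k + B%:Z))%:Z - B%:Z = k by lia.
Qed.

End CornerIsomorphism.

Definition cslpC (R : pzRingType) (r : R) : cslp R :=
  CSLP 0 (fun k => if k == 0 then r else 0).

Lemma cwf_cslpC (R : pzRingType) (phi : R -> R) (r : R) : cwf phi (cslpC r).
Proof.
split => [k|n|n] /=; first by case: eqP => // ->.
- by case: n => [|n] /=; rewrite ?mul1r // mulr0.
- by case: n => [|n] /=; rewrite ?mulr1 // mul0r.
Qed.

Lemma ccf_cmul_cstarC (R : pzRingType) (s phi : R -> R) (r : R) k :
  ccf (cmul phi (cslpC r) (cstar s (cslpC r))) k = if k == 0 then r * s r else 0.
Proof. by rewrite /= !big_ord1 /= !subrr eq_sym. Qed.

Lemma proper_of_A_graded_proper (R : pzRingType) (s phi : R -> R) :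
  A_graded_proper s phi -> star_proper s.
Proof.
move=> A_proper r rr0; apply: (A_proper (cslpC r) (cwf_cslpC phi r) _ _ 0) => //.
  by exists 0 => k /negbTE /= ->.
by move=> k; rewrite ccf_cmul_cstarC /=; case: ifP.
Qed.

Lemma positive_definite_of_A_positive_definite (R : pzRingType) (s phi : R -> R) :
  A_positive_definite s phi -> star_positive_definite s.
Proof.
move=> A_posdef n r rr0 i.
apply: (A_posdef n (fun i => cslpC (r i)) (fun i => cwf_cslpC phi (r i)) _ i 0).
move=> k; rewrite ccf_big_cadd.
under eq_bigr do rewrite ccf_cmul_cstarC.
by case: eqP => _; [exact: rr0 | rewrite big1].
Qed.

Theorem mainTheorem10 (R : pzRingType) (s : R -> R) (p : R) (phi : R -> R) :
  is_involution s -> is_projection s p -> is_corner_star_iso s p phi ->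
  (star_proper s <-> A_graded_proper s phi) /\
  (star_positive_definite s <-> A_positive_definite s phi).
Proof.
move=> Hs Hp Hphi; split; split.
- exact: A_graded_proper_of_proper Hs Hp Hphi.
- exact: proper_of_A_graded_proper.
- exact: A_positive_definite_of_positive_definite Hs Hp Hphi.
- exact: positive_definite_of_A_positive_definite.
Qed.
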